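(* Let $G$ be a nilpotent Lie group of dimension $2n$ with a left-invariant $\mathrm{SL}(n,\mathbb{R})$-structure whose underlying almost paracomplex structure is integrable (paracomplex). Then its associated one-forms satisfy \[\lambda=\frac{n-1}{n}\,(f_8-f_4).\]
   Context: An $\mathrm{SL}(n,\mathbb{R})$-structure on a $2n$-manifold is a splitting $TM=V\oplus H$ into rank-$n$ distributions, $K=\mathrm{id}_V-\mathrm{id}_H$, a neutral metric $g$ with $g(KX,KY)=-g(X,Y)$, and forms $F,\alpha,\beta$ such that locally there are coframes $e^1,\dots,e^{2n}$ with $V=\{e^{n+1}=\dots=e^{2n}=0\}$, $H=\{e^1=\dots=e^n=0\}$, $g=\sum_i(e^i\otimes e^{n+i}+e^{n+i}\otimes e^i)$, $F=\sum_ie^i\wedge e^{n+i}$, $\alpha=e^1\wedge\dots\wedge e^n$, $\beta=e^{n+1}\wedge\dots\wedge e^{2n}$; $(e_I)$ is the dual frame. It is paracomplex if $V$ and $H$ are integrable. Forms split by type $\Lambda^{p,q}$ ($p$ factors among $e^1,\dots,e^n$, $q$ among $e^{n+1},\dots,e^{2n}$). The one-form $\lambda$ is $\lambda(X)=\frac1n\sum_{i=1}^ng(\nabla_Xe_i,e_{n+i})$, $\nabla$ the Levi-Civita connection. For $\gamma\in\Lambda^{2,1}\oplus\Lambda^{1,2}$ set $\Lambda(\gamma)=-\frac1{n-1}\sum_{i=1}^n e_i\lrcorner(e_{n+i}\lrcorner\gamma)$, and define $f_4=-\frac12\Lambda\big((dF)^{1,2}\big)\in\Lambda^{0,1}$ and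 $f_8=-\frac12\Lambda\big((dF)^{2,1}\big)\in\Lambda^{1,0}$. *)

(* Left-invariant geometry on a Lie group G is encoded on its
   Lie algebra g = T_e G, using the global left-invariant adapted frame
   (e_1..e_n spanning V, e_{n+1}..e_{2n} spanning H). *)
From HB Require Import structures.
From mathcomp Require Import all_boot all_order all_algebra.
From mathcomp Require Import reals.
Set Implicit Arguments. Unset Strict Implicit. Unset Printing Implicit Defensive.
Import Order.TTheory GRing.Theory Num.Theory.
Local Open Scope ring_scope.

(* Index set of the adapted frame: [inl i] is e_i (i = 1..n, spanning V),
   [inr i] is e_{n+i} (spanning H). *)
Definition idx (n : nat) : finType := ('I_n + 'I_n)%type.

Definition isV {n} (a : idx n) : bool := if a is inl _ then true else false.

Section Defs.
Variable R : realType.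
Variable n : nat.

Definition strconst := idx n -> idx n -> idx n -> R.
Definition vec := idx n -> R.

Definition e (a : idx n) : vec := fun k => (k == a)%:R.

Definition bracket (c : strconst) (x y : vec) : vec :=
  fun k => \sum_(a : idx n) \sum_(b : idx n) x a * y b * c a b k.

Definition is_lie_algebra (c : strconst) : Prop :=
  (forall a b k, c a b k = - c b a k) /\
  (forall x y z : vec, forall k,
      bracket c x (bracket c y z) k + bracket c y (bracket c z x) k
      + bracket c z (bracket c x y) k = 0).

(* Nilpotent: the lower central series terminates, i.e. some iterated bracket
   [x_1,[x_2,[...,[x_m,y]...]]] of fixed length vanishes identically. *)
Definition nilpotent (c : strconst) : Prop :=
  exists m : nat, forall (xs : seq vec) (y : vec), size xs = m ->
    foldr (bracket c) y xs = (fun _ => 0).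

(* V and H are integrable (involutive): [V,V] c V and [H,H] c H. *)
Definition paracomplex (c : strconst) : Prop :=
  (forall a b k, isV a -> isV b -> ~~ isV k -> c a b k = 0) /\
  (forall a b k, ~~ isV a -> ~~ isV b -> isV k -> c a b k = 0).

(* The neutral metric g = \sum_i (e^i (x) e^{n+i} + e^{n+i} (x) e^i). *)
Definition gb (a b : idx n) : R :=
  match a, b with
  | inl i, inr j => (i == j)%:R
  | inr i, inl j => (i == j)%:R
  | _, _ => 0
  end.
Definition g (x y : vec) : R := \sum_(a : idx n) \sum_(b : idx n) x a * y b * gb a b.

(* The Levi-Civita connection on left-invariant vector fields, given by its
   coefficients: nabla_{e_a} e_b = \sum_k Gam a b k e_k.  It is characterised
   as the torsion-free connection with nabla g = 0 (for left-invariant fields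
   g(Y,Z) is constant, so X g(Y,Z) = 0). *)
Definition connection := idx n -> idx n -> idx n -> R.

Definition is_levi_civita (c : strconst) (Gam : connection) : Prop :=
  (forall a b k, Gam a b k - Gam b a k = c a b k) /\
  (forall a b d, g (Gam a b) (e d) + g (e b) (Gam a d) = 0).

Definition lambda (Gam : connection) : vec :=
  fun a => n%:R^-1 * \sum_(i < n) g (Gam a (inl i)) (e (inr i)).

(* F = \sum_i e^i /\ e^{n+i}, components F(e_a, e_b). *)
Definition Fb (a b : idx n) : R :=
  match a, b with
  | inl i, inr j => (i == j)%:R
  | inr i, inl j => - (i == j)%:R
  | _, _ => 0
  end.

(* dF on left-invariant fields (determinant convention for wedge/d):
   dF(X,Y,Z) = -F([X,Y],Z) + F([X,Z],Y) - F([Y,Z],X). Components. *)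
Definition dF (c : strconst) (a b d : idx n) : R :=
  - (\sum_k c a b k * Fb k d) + (\sum_k c a d k * Fb k b)
  - (\sum_k c b d k * Fb k a).

Definition type_part (p : nat) (gam : idx n -> idx n -> idx n -> R)
  (a b d : idx n) : R :=
  if (isV a + isV b + isV d)%N == p then gam a b d else 0.

(* Lambda(gam)(e_z) = -1/(n-1) \sum_i (e_i _| (e_{n+i} _| gam))(e_z)
                   = -1/(n-1) \sum_i gam(e_{n+i}, e_i, e_z). *)
Definition Lam (gam : idx n -> idx n -> idx n -> R) : vec :=
  fun z => - (n.-1)%:R^-1 * \sum_(i < n) gam (inr i) (inl i) z.

Definition f4 (c : strconst) : vec :=
  fun z => - 2^-1 * Lam (type_part 1 (dF c)) z.
Definition f8 (c : strconst) : vec :=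
  fun z => - 2^-1 * Lam (type_part 2 (dF c)) z.

End Defs.

(* In the adapted frame, Koszul's formula gives
     2 n lambda(e_z) = tr(ad e_z on V) - tr(ad e_z on H) - B(z),
   with B(z) = g(sum_i [e_i, e_{n+i}], e_z), while
   sum_i dF(e_{n+i}, e_i, e_z) equals +-B(z) + tr(ad e_z on V) + tr(ad e_z on H),
   and f8 - f4 is a multiple of that sum.  Comparing, the identity reduces to
   tr(ad e_z on H) = 0 for e_z in V and tr(ad e_z on V) = 0 for e_z in H.
   When V is integrable, ad e_z preserves V for e_z in V, so its block on H
   is a diagonal block of the nilpotent, block-triangular matrix of ad e_z,
   hence nilpotent and traceless; symmetrically for H. *)
From mathcomp Require Import all_boot all_order all_algebra.
From mathcomp Require Import reals.
From mathcomp Require Import ring lra.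
Set Implicit Arguments. Unset Strict Implicit. Unset Printing Implicit Defensive.
Import GRing.Theory Num.Theory.
Local Open Scope ring_scope.

Section NilpotentMatrix.
Variable R : fieldType.

Lemma char_poly_nilpotent n (A : 'M[R]_n) m : A ^+ m = 0 -> char_poly A = 'X^n.
Proof.
move=> Am0.
pose X : 'M[{poly R}]_n := 'X%:M; pose B := map_mx polyC A.
have XB : GRing.comm X B by rewrite /GRing.comm -!mulmxE scalar_mxC.
have Bm0 : B ^+ m = 0.
  suff -> : B ^+ m = map_mx polyC (A ^+ m) by rewrite Am0 map_mx0.
  by elim: m {Am0} => [|k IH]; rewrite ?map_mx1 // !exprS IH -mulmxE map_mxM.
have Xm : X ^+ m = ('X ^+ m)%:M.
  by elim: m {Am0 Bm0} => [|k IH]; rewrite // !exprS IH -mulmxE -scalar_mxM.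
have /(congr1 determinant) := subrXX_comm m XB.
rewrite Bm0 subr0 Xm -mulmxE det_mulmx det_scalar -exprM => chA_dvd.
have : char_poly A %| ('X - 0%:P) ^+ (m * n) by rewrite subr0 chA_dvd dvdp_mulr.
case/dvdp_exp_XsubCP => k _.
rewrite subr0 eqp_monic ?char_poly_monic ?monicXn // => /eqP chA.
by have := size_char_poly A; rewrite chA size_polyXn => -[->].
Qed.

Lemma mxtrace_nilpotent n (A : 'M[R]_n) m : A ^+ m = 0 -> \tr A = 0.
Proof.
case: n A => [|n] A Am0; first by rewrite /mxtrace big_ord0.
apply/eqP; rewrite -oppr_eq0 -char_poly_trace // (char_poly_nilpotent Am0).
by rewrite coefXn eqn_leq ltnn andbF.
Qed.

Variables m1 m2 : nat.
Implicit Type A : 'M[R]_(m1 + m2).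

Lemma ulsubmxX A k : dlsubmx A = 0 -> ulsubmx (A ^+ k) = ulsubmx A ^+ k.
Proof.
move=> dlA0; elim: k => [|k IH].
  by rewrite !expr0 -[LHS]/(ulsubmx 1%:M) scalar_mx_block block_mxKul.
rewrite !exprSr -!mulmxE -[A in _ *m A]submxK -[A ^+ k]submxK mulmx_block.
by rewrite block_mxKul dlA0 mulmx0 addr0 IH.
Qed.

Lemma drsubmxX A k : ursubmx A = 0 -> drsubmx (A ^+ k) = drsubmx A ^+ k.
Proof.
move=> urA0; elim: k => [|k IH].
  by rewrite !expr0 -[LHS]/(drsubmx 1%:M) scalar_mx_block block_mxKdr.
rewrite !exprSr -!mulmxE -[A in _ *m A]submxK -[A ^+ k]submxK mulmx_block.
by rewrite block_mxKdr urA0 mulmx0 add0r IH.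
Qed.

Lemma mxtrace_ulsubmx_nilpotent A m :
  dlsubmx A = 0 -> A ^+ m = 0 -> \tr (ulsubmx A) = 0.
Proof.
move=> dlA0 Am0; apply: (mxtrace_nilpotent (m := m)).
by rewrite -ulsubmxX // Am0; apply/matrixP => i j; rewrite !mxE.
Qed.

Lemma mxtrace_drsubmx_nilpotent A m :
  ursubmx A = 0 -> A ^+ m = 0 -> \tr (drsubmx A) = 0.
Proof.
move=> urA0 Am0; apply: (mxtrace_nilpotent (m := m)).
by rewrite -drsubmxX // Am0; apply/matrixP => i j; rewrite !mxE.
Qed.

End NilpotentMatrix.

Section Adjoint.
Variables (R : realType) (n : nat) (c : strconst R n).

Definition ad_mx (z : idx n) : 'M[R]_(n + n) :=
  \matrix_(b, k) c z (split b) (split k).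
Definition coord (w : vec R n) : 'rV[R]_(n + n) := \row_k w (split k).

Definition trV (z : idx n) : R := \sum_(i < n) c z (inl i) (inl i).
Definition trH (z : idx n) : R := \sum_(i < n) c z (inr i) (inr i).

Lemma sum_idx_split (F : idx n -> R) : \sum_a F a = \sum_(k < n + n) F (split k).
Proof. by rewrite (reindex split) //; exists unsplit => k _; rewrite ?splitK ?unsplitK. Qed.

Lemma bracket_eE z (w : vec R n) k : bracket c (e R z) w k = \sum_b w b * c z b k.
Proof.
rewrite /bracket (bigD1 z) //= [X in _ + X]big1 => [|a /negPf za]; last first.
  by rewrite big1 // => b _; rewrite /e za !mul0r.
by rewrite addr0 /e eqxx; apply: eq_bigr => b _; rewrite mul1r.
Qed.

Lemma coord_bracket z w : coord (bracket c (e R z) w) = coord w *m ad_mx z.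
Proof.
apply/rowP => k; rewrite !mxE bracket_eE sum_idx_split.
by apply: eq_bigr => b _; rewrite !mxE.
Qed.

Lemma coord_e a : coord (e R a) = delta_mx 0 (unsplit a).
Proof. by apply/rowP => k; rewrite !mxE /e (can2_eq splitK unsplitK). Qed.

Lemma ad_mx_nilpotent z : nilpotent c -> exists m, ad_mx z ^+ m = 0.
Proof.
case=> m nil_m; exists m.
have coord_iter j y :
    coord (foldr (bracket c) y (nseq j (e R z))) = coord y *m ad_mx z ^+ j.
  elim: j => [|j IH]; first by rewrite expr0 mulmx1.
  by rewrite /= coord_bracket IH exprSr mulmxA.
apply/row_matrixP => b; rewrite row0 rowE -[b]splitK -coord_e -coord_iter.
by rewrite nil_m ?size_nseq //; apply/rowP => k; rewrite !mxE.
Qed.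

Lemma mxtrace_ulsubmx_ad z : \tr (ulsubmx (ad_mx z)) = trV z.
Proof. by apply: eq_bigr => i _; rewrite !mxE !(unsplitK (inl _ i)). Qed.

Lemma mxtrace_drsubmx_ad z : \tr (drsubmx (ad_mx z)) = trH z.
Proof. by apply: eq_bigr => i _; rewrite !mxE !(unsplitK (inr _ i)). Qed.

Hypotheses (c_nil : nilpotent c) (c_pc : paracomplex c).

Lemma trH_inl j : trH (inl j) = 0.
Proof.
have [m adm0] := ad_mx_nilpotent (inl j) c_nil.
rewrite -mxtrace_drsubmx_ad (mxtrace_drsubmx_nilpotent _ adm0) //.
apply/matrixP => i k.
by rewrite !mxE (unsplitK (inl _ i)) (unsplitK (inr _ k)) c_pc.1.
Qed.

Lemma trV_inr j : trV (inr j) = 0.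
Proof.
have [m adm0] := ad_mx_nilpotent (inr j) c_nil.
rewrite -mxtrace_ulsubmx_ad (mxtrace_ulsubmx_nilpotent _ adm0) //.
apply/matrixP => i k.
by rewrite !mxE (unsplitK (inr _ i)) (unsplitK (inl _ k)) c_pc.2.
Qed.

End Adjoint.

Lemma sumr_delta (S : pzSemiRingType) (T : finType) (F : T -> S) (d : T) :
  \sum_(a : T) F a * (a == d)%:R = F d.
Proof.
rewrite (bigD1 d) //= eqxx mulr1 big1 ?addr0 // => a /negPf ->; exact: mulr0.
Qed.

Section Metric.
Variables (R : realType) (n : nat).

Definition swap_idx (a : idx n) : idx n :=
  match a with inl i => inr i | inr i => inl i end.

Definition Fsign (a : idx n) : R := if a is inl _ then -1 else 1.

Lemma gbE (a b : idx n) : gb R a b = (a == swap_idx b)%:R.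
Proof. by case: a b => i [] j. Qed.

Lemma gbC (a b : idx n) : gb R a b = gb R b a.
Proof. by case: a b => i [] j //=; rewrite eq_sym. Qed.

Lemma FbE (a b : idx n) : Fb R a b = Fsign b * (a == swap_idx b)%:R.
Proof. by case: a b => i [] j /=; rewrite ?mul1r ?mulN1r ?mulr0 ?oppr0. Qed.

Lemma g_e (x : vec R n) d : g x (e R d) = x (swap_idx d).
Proof.
rewrite /g -(sumr_delta x (swap_idx d)); apply: eq_bigr => a _.
rewrite (bigD1 d) //= big1 => [|b /negPf bd]; last by rewrite /e bd mulr0 mul0r.
by rewrite /e eqxx mulr1 addr0 gbE.
Qed.

Lemma gC (x y : vec R n) : g x y = g y x.
Proof.
rewrite /g exchange_big; apply: eq_bigr => a _; apply: eq_bigr => b _.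
by rewrite gbC [x b * _]mulrC.
Qed.

Lemma Fb_sum (x : vec R n) d : \sum_k x k * Fb R k d = Fsign d * x (swap_idx d).
Proof. by under eq_bigr do rewrite FbE mulrCA; rewrite -mulr_sumr sumr_delta. Qed.

End Metric.

Arguments Fsign {R n}.

Section LeviCivita.
Variables (R : realType) (n : nat) (c : strconst R n) (Gam : connection R n).
Hypothesis c_anti : forall a b k, c a b k = - c b a k.
Hypothesis Gam_lc : is_levi_civita c Gam.

Lemma levi_civita_koszul a b d : Gam a b (swap_idx d) =
  2^-1 * (c a b (swap_idx d) - c b d (swap_idx a) + c d a (swap_idx b)).
Proof.
have [tor met] := Gam_lc.
have m1 := met a b d; have m2 := met b a d; have m3 := met d b a.
rewrite g_e gC g_e in m1; rewrite g_e gC g_e in m2; rewrite g_e gC g_e in m3.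
have t1 := tor a b (swap_idx d); have t2 := tor b d (swap_idx a).
have t3 := tor d a (swap_idx b).
lra.
Qed.

Definition bracket_pairs (z : idx n) : R :=
  \sum_(i < n) c (inl i) (inr i) (swap_idx z).

Lemma lambda_trace z :
  lambda Gam z = n%:R^-1 / 2 * (trV c z - bracket_pairs z - trH c z).
Proof.
rewrite /lambda.
under eq_bigr => i _ do rewrite g_e levi_civita_koszul /= (c_anti (inr i) z).
rewrite -mulr_sumr !big_split /= !sumrN /trV /trH /bracket_pairs; ring.
Qed.

Lemma sum_dF z : \sum_(i < n) dF c (inr i) (inl i) z =
  Fsign z * bracket_pairs z + trH c z + trV c z.
Proof.
rewrite /bracket_pairs /trH /trV mulr_sumr -!big_split; apply: eq_bigr => i _.
rewrite /dF !Fb_sum /= (c_anti (inr i) (inl i)) (c_anti (inr i) z) (c_anti (inl i) z).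
ring.
Qed.

End LeviCivita.

Lemma f8_sub_f4 (R : realType) n (c : strconst R n) z : f8 c z - f4 c z =
  - Fsign z / (2 * n.-1%:R) * \sum_(i < n) dF c (inr i) (inl i) z.
Proof.
rewrite /f8 /f4 /Lam /type_part invfM.
by case: z => j /=; rewrite big1_eq; ring.
Qed.

Theorem lemma8p1 (R : realType) (n : nat) (c : strconst R n)
  (Gam : connection R n) :
  (1 < n)%N ->
  is_lie_algebra c -> nilpotent c -> paracomplex c ->
  is_levi_civita c Gam ->
  forall z : idx n,
    lambda Gam z = (n.-1)%:R / n%:R * (f8 c z - f4 c z).
Proof.
move=> n_gt1 [c_anti _] c_nil c_pc Gam_lc z.
have n_neq0 : n%:R != 0 :> R by rewrite pnatr_eq0 -lt0n ltnW.
have n1_neq0 : n.-1%:R != 0 :> R by rewrite pnatr_eq0 -lt0n -ltnS prednK // ltnW.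
rewrite (lambda_trace c_anti Gam_lc) f8_sub_f4 (sum_dF c_anti).
case: z => j /=; [rewrite (trH_inl c_nil c_pc) | rewrite (trV_inr c_nil c_pc)];
  by field; rewrite n_neq0 n1_neq0.
Qed.
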